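(* Let $\mathcal G=(G,f,h)$ be a network dynamical system of size $N$ with maximum out-degree $\Delta(G)$, satisfying Assumptions 1 and 2. Suppose that for each $i\in[N]$ there are functions $\psi_i^1,\dots,\psi_i^{s_i}:\mathbb R^N\to\mathbb R$ and nonzero coefficients $c_{i,1},\dots,c_{i,s_i}\in\mathbb R$ such that every trajectory of the system satisfies $x_i(t+1)=\sum_{l=1}^{s_i}c_{i,l}\psi_i^l(x(t))$ for all $t$; let $s_{\max}=\max_i s_i$. For each $q\in[N]$ fix a $q$-pinching initial condition with trajectory $x^q(t)$, and for each $i$ let $\Psi_i\in\mathbb R^{Ns_{\max}\times s_i}$ be the matrix whose row indexed by the pair $(q,t)$, $q\in[N]$, $t\in\{0,\dots,s_{\max}-1\}$, is $(\psi_i^1(x^q(t)),\dots,\psi_i^{s_i}(x^q(t)))$; assume $\operatorname{rank}\Psi_i=s_i$ for all $i$. Let $\phi_q\in\mathbb R^{P\times N}$, $q\in[N]$, satisfy $\delta_{2(\Delta(G)+1)^{s_{\max}}}(\phi_q)<\sqrt2-1$, and let $y^q(t)=\phi_q x^q(t)$ for $t=1,\dots,s_{\max}$. Then: (a) for every $q\in[N]$ and $t\in\{1,\dots,s_{\max}\}$, the problem $\min_{\tilde x}\|\tilde x\|_1$ subject to $\phi_q\tilde x=y^q(t)$ has the unique solution $x^q(t)$; (b) $\operatorname{supp}(x^q(1))\setminus\{q\}=L_1(q)$ for every $q$, so the adjacency matrix is uniquely determined; (c) for each $i\in[N]$, letting $b_i\in\mathbb R^{Ns_{\max}}$ be the vector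 whose entry indexed by $(q,t)$ (same ordering as the rows of $\Psi_i$) is $x_i^q(t+1)$, the linear system $\Psi_i c=b_i$ has the unique solution $c=(c_{i,1},\dots,c_{i,s_i})^T$, and it equals $\Psi_i^\dagger b_i=(\Psi_i^T\Psi_i)^{-1}\Psi_i^Tb_i$.
   Context: Let $G$ be a directed graph on vertex set $[N]=\{1,\dots,N\}$ without self-loops, with adjacency matrix $A\in\{0,1\}^{N\times N}$, where $A_{ij}=1$ if and only if $i$ receives an edge (input) from $j$; in particular $A_{ii}=0$. The out-degree of $q\in[N]$ is $d_q=\#\{i: A_{iq}=1\}$, the maximum out-degree is $\Delta(G)=\max_{q}d_q$, and the first-level set of $q$ is $L_1(q)=\{i\in[N]: A_{iq}=1\}$. The network dynamical system $\mathcal G=(G,f,h)$ is the discrete-time system $x_i(t+1)=f_i(x_i(t))+\sum_{j=1}^N A_{ij}h_{ij}(x_i(t),x_j(t))$ for $i\in[N]$, $t=0,1,2,\dots$, where $f_i:\mathbb R\to\mathbb R$ and $h_{ij}:\mathbb R\times\mathbb R\to\mathbb R$; the state vector is $x(t)=(x_1(t),\dots,x_N(t))^T$. Assumption 1: $f_i(0)=0$ for all $i\in[N]$. Assumption 2: there is $\delta>0$ such that for all $i,j\in[N]$, $h_{ij}(0,0)=0$ and $h_{ij}(0,v)\neq 0$ for every $v$ with $0<|v|<\delta$. For $q\in[N]$, a $q$-pinching initial condition is $x^q(0)$ with $x^q_i(0)=\epsilon_q\delta_{iq}$ (Kronecker delta), where $0<|\epsilon_q|<\delta$; $x^q(t)$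 denotes the resulting trajectory. For $x\in\mathbb R^N$, $\operatorname{supp}(x)=\{i: x_i\neq0\}$ and $\|x\|_0=\#\operatorname{supp}(x)$; $x$ is $s$-sparse if $\|x\|_0\le s$. The restricted isometry constant $\delta_s(\phi)$ of $\phi\in\mathbb R^{P\times N}$ is the smallest number such that $(1-\delta_s(\phi))\|x\|_2^2\le\|\phi x\|_2^2\le(1+\delta_s(\phi))\|x\|_2^2$ for all $s$-sparse $x\in\mathbb R^N$. $\Psi^\dagger$ denotes the Moore–Penrose pseudoinverse. *)

From HB Require Import structures.
From mathcomp Require Import all_boot all_order all_algebra.
From mathcomp Require Import reals.
Set Implicit Arguments. Unset Strict Implicit. Unset Printing Implicit Defensive.
Import Order.TTheory GRing.Theory Num.Theory.
Local Open Scope ring_scope.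

Section NDS.
Variables (R : realType) (N : nat).

(* Adjacency: A i j = true iff i receives an edge from j. *)
Definition outdeg (A : 'I_N -> 'I_N -> bool) (q : 'I_N) : nat :=
  #|[set i | A i q]|.
Definition maxOutdeg (A : 'I_N -> 'I_N -> bool) : nat :=
  (\max_(q < N) outdeg A q)%N.
Definition L1 (A : 'I_N -> 'I_N -> bool) (q : 'I_N) : {set 'I_N} :=
  [set i | A i q].

Definition nds_step (A : 'I_N -> 'I_N -> bool) (f : 'I_N -> R -> R)
    (h : 'I_N -> 'I_N -> R -> R -> R) (x : 'cV[R]_N) : 'cV[R]_N :=
  \col_i (f i (x i 0) + \sum_(j < N | A i j) h i j (x i 0) (x j 0)).

Definition traj A f h (x0 : 'cV[R]_N) (t : nat) : 'cV[R]_N :=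
  iter t (nds_step A f h) x0.

Definition pinch (q : 'I_N) (eps : R) : 'cV[R]_N :=
  \col_i (if i == q then eps else 0).

Definition supp (x : 'cV[R]_N) : {set 'I_N} := [set i | x i 0 != 0].
Definition l0norm (x : 'cV[R]_N) : nat := #|supp x|.
Definition l1norm (x : 'cV[R]_N) : R := \sum_i `|x i 0|.
Definition sqnorm (m : nat) (x : 'cV[R]_m) : R := \sum_i (x i 0) ^+ 2.

Definition RIP_holds (P : nat) (phi : 'M[R]_(P, N)) (s : nat) (d : R) : Prop :=
  forall x : 'cV[R]_N, (l0norm x <= s)%N ->
    (1 - d) * sqnorm x <= sqnorm (phi *m x) /\
    sqnorm (phi *m x) <= (1 + d) * sqnorm x.

Definition is_RIC (P : nat) (phi : 'M[R]_(P, N)) (s : nat) (d : R) : Prop :=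
  RIP_holds phi s d /\ forall d', RIP_holds phi s d' -> d <= d'.

End NDS.

Definition is_MP_pinv (R : realType) (m n : nat) (A : 'M[R]_(m, n))
    (X : 'M[R]_(n, m)) : Prop :=
  [/\ A *m X *m A = A, X *m A *m X = X,
      (A *m X)^T = A *m X & (X *m A)^T = X *m A].

(* row index (q,t) of an (N * smax)-row matrix, in lexicographic order *)
Definition pair_of (N S : nat) (k : 'I_(N * S)) : 'I_N * 'I_S :=
  enum_val (cast_ord (esym (mxvec_cast N S)) k).

From HB Require Import structures.
From mathcomp Require Import all_boot all_order all_algebra.
From mathcomp Require Import reals.
From mathcomp Require Import ring lra zify.
Set Implicit Arguments. Unset Strict Implicit. Unset Printing Implicit Defensive.
Import Order.TTheory GRing.Theory Num.Theory.
Local Open Scope ring_scope.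

(* (a) is Candes' l1-recovery theorem.  Since f_i(0) = 0 and h_ij(0, 0) = 0, a
   coordinate can only become nonzero through an edge from a nonzero one, so
   x^q(t) has at most (Delta + 1)^t nonzero entries.  A restricted isometry
   constant of order 2K below sqrt 2 - 1 gives the null space property: every
   nonzero h with phi h = 0 has more l1 mass off any set T of size <= K than on
   it; this is proved by cutting the complement of T into runs of K entries of
   decreasing magnitude and bounding cross terms of disjointly supported vectors
   through the polarization identity.  The null space property on T = supp x
   makes x the unique l1 minimizer.
   (b) One step from a pinching condition only reaches the out-neighbours of q,
   each with the nonzero value h_iq(0, eps_q).
   (c) Psi_i has full column rank, so Psi_i c = b_i has at most one solution;
   the representation of the dynamics provides one, and any left inverse of
   Psi_i (the Gram pseudoinverse, or any Moore-Penrose inverse) recovers it. *)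

Section Euclid.
Variables (R : realType) (m : nat).
Implicit Types x y : 'cV[R]_m.

Definition dotv x y : R := \sum_i x i 0 * y i 0.
Definition l2norm x : R := Num.sqrt (sqnorm x).

Lemma sqnorm_dotv x : sqnorm x = dotv x x.
Proof. by apply: eq_bigr => i _; rewrite expr2. Qed.

Lemma sqnorm_ge0 x : 0 <= sqnorm x.
Proof. by apply: sumr_ge0 => i _; rewrite sqr_ge0. Qed.

Lemma sqnorm_eq0 x : (sqnorm x == 0) = (x == 0).
Proof.
apply/idP/eqP => [|->]; last by rewrite /sqnorm big1 // => i _; rewrite mxE expr0n.
rewrite psumr_eq0 => [/allP x0|i _]; last exact: sqr_ge0.
apply/matrixP => i j; rewrite ord1 mxE; apply/eqP.
by rewrite -sqrf_eq0; apply: x0 (mem_index_enum i).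
Qed.

Lemma sqnormN x : sqnorm (- x) = sqnorm x.
Proof. by apply: eq_bigr => i _; rewrite mxE sqrrN. Qed.

Lemma sqnormZ a x : sqnorm (a *: x) = a ^+ 2 * sqnorm x.
Proof. by rewrite /sqnorm mulr_sumr; apply: eq_bigr => i _; rewrite mxE exprMn. Qed.

Lemma dotv0l x : dotv 0 x = 0.
Proof. by rewrite /dotv big1 // => i _; rewrite mxE mul0r. Qed.

Lemma dotv0r x : dotv x 0 = 0.
Proof. by rewrite /dotv big1 // => i _; rewrite mxE mulr0. Qed.

Lemma dotvDl x y z : dotv (x + y) z = dotv x z + dotv y z.
Proof. by rewrite -big_split; apply: eq_bigr => i _; rewrite mxE mulrDl. Qed.

Lemma dotvNr x y : dotv x (- y) = - dotv x y.
Proof. by rewrite /dotv -sumrN; apply: eq_bigr => i _; rewrite mxE mulrN. Qed.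

Lemma dotvZl a x y : dotv (a *: x) y = a * dotv x y.
Proof. by rewrite /dotv mulr_sumr; apply: eq_bigr => i _; rewrite mxE mulrA. Qed.

Lemma dotvZr a x y : dotv x (a *: y) = a * dotv x y.
Proof. by rewrite /dotv mulr_sumr; apply: eq_bigr => i _; rewrite mxE mulrCA. Qed.

Lemma dotv_sumr I (r : seq I) (p : pred I) x (y : I -> 'cV[R]_m) :
  dotv x (\sum_(j <- r | p j) y j) = \sum_(j <- r | p j) dotv x (y j).
Proof.
rewrite /dotv exchange_big; apply: eq_bigr => i _.
by rewrite summxE mulr_sumr.
Qed.

Lemma dotv_polar x y : 4 * dotv x y = sqnorm (x + y) - sqnorm (x - y).
Proof.
rewrite /sqnorm -sumrB mulr_sumr; apply: eq_bigr => i _; rewrite !mxE; ring.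
Qed.

Lemma l2norm_ge0 x : 0 <= l2norm x.
Proof. exact: sqrtr_ge0. Qed.

Lemma sqr_l2norm x : l2norm x ^+ 2 = sqnorm x.
Proof. by rewrite sqr_sqrtr // sqnorm_ge0. Qed.

Lemma l2norm_eq0 x : (l2norm x == 0) = (x == 0).
Proof. by rewrite sqrtr_eq0 le_eqVlt ltNge sqnorm_ge0 orbF sqnorm_eq0. Qed.

Lemma l2norm0 : l2norm 0 = 0.
Proof. by apply/eqP; rewrite l2norm_eq0. Qed.

Lemma l2norm_gt0 x : (0 < l2norm x) = (x != 0).
Proof. by rewrite lt_neqAle l2norm_ge0 andbT eq_sym l2norm_eq0. Qed.

End Euclid.

Lemma sqr_sum_le_card (R : realType) (I : finType) (S : {pred I}) (a : I -> R) :
  (\sum_(i in S) a i) ^+ 2 <= #|S|%:R * \sum_(i in S) a i ^+ 2.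
Proof.
set A := \sum_(i in S) a i; set Q := \sum_(i in S) a i ^+ 2; set n : R := #|S|%:R.
have [S0|n_gt0] := eqVneq #|S| 0%N.
  by rewrite /A /n S0 big_pred0 ?mul0r ?expr0n // => i; rewrite (card0_eq S0).
have : 0 <= \sum_(i in S) (n * a i - A) ^+ 2 by apply: sumr_ge0 => i _; exact: sqr_ge0.
have -> : \sum_(i in S) (n * a i - A) ^+ 2 = n * (n * Q - A ^+ 2).
  rewrite (eq_bigr (fun i => n ^+ 2 * a i ^+ 2 - (2 * n * A) * a i + A ^+ 2)).
    by rewrite big_split sumrB /= -!mulr_sumr sumr_const -/A -/Q -mulr_natl; ring.
  by move=> i _; ring.
by rewrite pmulr_rge0 ?subr_ge0 // ltr0n lt0n.
Qed.

Section Support.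
Variables (R : realType) (N : nat).
Implicit Types (x y : 'cV[R]_N) (S T : {set 'I_N}).

Lemma supp_subP x S : reflect (forall i, i \notin S -> x i 0 = 0) (supp x \subset S).
Proof.
apply: (iffP subsetP) => [sub i|x0 i]; last by rewrite inE; apply: contraR => /x0 ->.
by apply: contraNeq => xi; apply: sub; rewrite inE.
Qed.

Lemma suppN x : supp (- x) = supp x.
Proof. by apply/setP => i; rewrite !inE mxE oppr_eq0. Qed.

Lemma suppZ_sub a x : supp (a *: x) \subset supp x.
Proof. by apply/supp_subP => i; rewrite inE mxE negbK => /eqP ->; rewrite mulr0. Qed.

Lemma suppD_sub x y : supp (x + y) \subset supp x :|: supp y.
Proof.
by apply/supp_subP => i; rewrite !inE negb_or !negbK mxE => /andP[/eqP -> /eqP ->]; rewrite addr0.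
Qed.

Lemma sqnormD_disjoint x y :
  [disjoint supp x & supp y] -> sqnorm (x + y) = sqnorm x + sqnorm y.
Proof.
move=> dis; rewrite /sqnorm -big_split /=; apply: eq_bigr => i _; rewrite mxE.
have [xi|] := boolP (i \in supp x).
  by move: (disjointFr dis xi); rewrite inE => /negbFE/eqP ->; rewrite expr0n !addr0.
by rewrite inE negbK => /eqP ->; rewrite expr0n !add0r.
Qed.

Lemma sqnormB_disjoint x y :
  [disjoint supp x & supp y] -> sqnorm (x - y) = sqnorm x + sqnorm y.
Proof. by move=> dis; rewrite sqnormD_disjoint ?suppN // sqnormN. Qed.

Lemma l1norm_setC S x :
  l1norm x = \sum_(i in S) `|x i 0| + \sum_(i in ~: S) `|x i 0|.
Proof.
rewrite /l1norm (bigID (mem S)) /=; congr (_ + _).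
by apply: eq_bigl => i; rewrite inE.
Qed.

Lemma l1norm_eq0 x : (l1norm x == 0) = (x == 0).
Proof.
apply/idP/eqP => [|->]; last by rewrite /l1norm big1 // => i _; rewrite mxE normr0.
rewrite psumr_eq0 => [/allP x0|i _]; last exact: normr_ge0.
apply/matrixP => i j; rewrite ord1 mxE; apply/eqP.
by rewrite -normr_eq0; apply: x0 (mem_index_enum i).
Qed.

Definition restr S x : 'cV[R]_N := \col_i (if i \in S then x i 0 else 0).

Lemma supp_restr S x : supp (restr S x) \subset S.
Proof. by apply/supp_subP => i iS; rewrite mxE (negbTE iS). Qed.

Lemma sqnorm_restr S x : sqnorm (restr S x) = \sum_(i in S) x i 0 ^+ 2.
Proof.
rewrite /sqnorm [RHS]big_mkcond; apply: eq_bigr => i _; rewrite mxE.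
by case: ifP; rewrite ?expr0n.
Qed.

Lemma restr_setC S x : x = restr S x + restr (~: S) x.
Proof.
apply/matrixP => i j; rewrite ord1 !mxE inE.
by case: (i \in S); rewrite ?addr0 ?add0r.
Qed.

End Support.

Lemma RIP_holds_le (R : realType) N P (phi : 'M[R]_(P, N)) s d d' :
  RIP_holds phi s d -> d <= d' -> RIP_holds phi s d'.
Proof.
move=> rip le_dd' x sx; have [lo hi] := rip x sx; have := sqnorm_ge0 x.
split; nra.
Qed.

Section RIPInnerProduct.
Variables (R : realType) (N P : nat) (phi : 'M[R]_(P, N)) (s : nat) (d : R).
Hypothesis rip : RIP_holds phi s d.
Variables (S1 S2 : {set 'I_N}).
Hypotheses (dis12 : [disjoint S1 & S2]) (card12 : (#|S1| + #|S2| <= s)%N).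

Lemma rip_dotv_le x y : supp x \subset S1 -> supp y \subset S2 ->
  2 * dotv (phi *m x) (phi *m y) <= d * (sqnorm x + sqnorm y).
Proof.
move=> sx sy.
have dis : [disjoint supp x & supp y] := disjointW sx sy dis12.
have sparse (z : 'cV[R]_N) : supp z \subset supp x :|: supp y -> (l0norm z <= s)%N.
  move=> sz; apply: leq_trans (subset_leq_card sz) _.
  apply: leq_trans (leq_card_setU _ _) (leq_trans _ card12).
  by apply: leq_add; apply: subset_leq_card.
have [_ hi] := rip (sparse _ (suppD_sub x y)).
have sxy : supp (x - y) \subset supp x :|: supp y.
  by rewrite -(suppN y); exact: suppD_sub.
have [lo _] := rip (sparse _ sxy).
have := dotv_polar (phi *m x) (phi *m y); rewrite -mulmxDr -mulmxBr.
rewrite sqnormD_disjoint // in hi; rewrite sqnormB_disjoint // in lo; lra.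
Qed.

(* Rescaling [x] by [|y|] and [y] by [+-|x|] balances the two sides of [rip_dotv_le]. *)
Lemma rip_dotv_abs x y : supp x \subset S1 -> supp y \subset S2 ->
  `|dotv (phi *m x) (phi *m y)| <= d * l2norm x * l2norm y.
Proof.
move=> sx sy.
have [->|x0] := eqVneq x 0; first by rewrite mulmx0 dotv0l normr0 l2norm0 mulr0 mul0r.
have [->|y0] := eqVneq y 0; first by rewrite mulmx0 dotv0r normr0 l2norm0 mulr0.
set a := l2norm x; set b := l2norm y.
have ab_pos : 0 < a * b by rewrite mulr_gt0 ?l2norm_gt0.
have bound e : e ^+ 2 = a ^+ 2 ->
    2 * (b * (e * dotv (phi *m x) (phi *m y))) <= d * (b ^+ 2 * a ^+ 2 + a ^+ 2 * b ^+ 2).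
  move=> e2; have := rip_dotv_le (subset_trans (suppZ_sub b x) sx)
                                 (subset_trans (suppZ_sub e y) sy).
  by rewrite -!scalemxAr dotvZl dotvZr !sqnormZ e2 -!sqr_l2norm.
have := bound a erefl; have := bound (- a) (sqrrN a).
rewrite ler_norml; move: ab_pos; set D := dotv _ _; set t := a * b => t_gt0 hN hP.
have {}hN : - (d * t) <= D by rewrite -(ler_pM2l t_gt0) /t; nra.
have {}hP : D <= d * t by rewrite -(ler_pM2l t_gt0) /t; nra.
by rewrite -mulrA hN hP.
Qed.

End RIPInnerProduct.

Section Blocks.
Variables (R : realType) (N K : nat) (a : 'I_N -> R) (U : {set 'I_N}).
Hypothesis K_gt0 : (0 < K)%N.

Definition decr_enum : seq 'I_N := sort (fun i j => a j <= a i) (enum U).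

Definition block (j : nat) : {set 'I_N} :=
  [set i in U | (index i decr_enum %/ K == j)%N].

Lemma mem_decr_enum i : (i \in decr_enum) = (i \in U).
Proof. by rewrite mem_sort mem_enum. Qed.

Lemma uniq_decr_enum : uniq decr_enum.
Proof. by rewrite sort_uniq enum_uniq. Qed.

Lemma sorted_decr_enum : sorted (fun i j => a j <= a i) decr_enum.
Proof. by apply: sort_sorted => i j; apply: le_total. Qed.

Lemma index_decr_enum_lt i : i \in U -> (index i decr_enum < N)%N.
Proof.
rewrite -mem_decr_enum -index_mem => /leq_trans; apply.
by rewrite size_sort -cardE; apply: leq_trans (max_card _) _; rewrite card_ord.
Qed.

Lemma block_sub j : block j \subset U.
Proof. by apply/subsetP => i; rewrite inE => /andP[]. Qed.

Lemma mem_block i j :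
  (i \in block j) = (i \in U) && (j * K <= index i decr_enum < j.+1 * K)%N.
Proof.
by rewrite inE; congr (_ && _); rewrite eqn_leq leq_divRL // -ltnS ltn_divLR // andbC.
Qed.

Lemma block_disjoint j k : j != k -> [disjoint block j & block k].
Proof.
move=> jk; apply/pred0P => i /=; rewrite !inE.
by case: (i \in U) => //=; apply: contraNF jk => /andP[/eqP <- /eqP <-].
Qed.

Lemma card_block j : (#|block j| <= K)%N.
Proof.
rewrite cardE -(size_map (index^~ decr_enum)) -(size_iota (j * K) K).
apply: uniq_leq_size.
  rewrite map_inj_in_uniq ?enum_uniq // => x y; rewrite !mem_enum !mem_block.
  move=> /andP[xU _] /andP[yU _]; apply: (index_inj x); by rewrite mem_decr_enum.
move=> p /mapP[i]; rewrite mem_enum mem_block mem_iota mulSn => /andP[_ ip] ->.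
by rewrite addnC.
Qed.

(* A nonempty next block forces the current one to be a full run of [K]
   consecutive positions of [decr_enum]. *)
Lemma card_block_full j i : i \in block j.+1 -> (K <= #|block j|)%N.
Proof.
rewrite mem_block => /andP[iU /andP[lo _]].
pose g (p : 'I_K) := nth i decr_enum (j * K + p).
have g_lt (p : 'I_K) : (j * K + p < size decr_enum)%N.
  apply: leq_trans (_ : index i decr_enum < _)%N; last by rewrite index_mem mem_decr_enum.
  by apply: leq_trans lo; have := ltn_ord p; rewrite mulSn; lia.
have g_inj : injective g.
  move=> p1 p2 /eqP; rewrite /g nth_uniq ?g_lt ?uniq_decr_enum // eqn_add2l.
  by move/eqP/val_inj.
rewrite -(card_ord K) -(card_imset _ g_inj); apply/subset_leq_card/subsetP.
move=> k /imsetP[p _ ->]; rewrite mem_block -mem_decr_enum mem_nth ?g_lt //=.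
rewrite index_uniq ?g_lt ?uniq_decr_enum //; have := ltn_ord p; rewrite mulSn; lia.
Qed.

Lemma block_decay j i : i \in block j.+1 -> K%:R * a i <= \sum_(k in block j) a k.
Proof.
move=> iB; have ge_ai k : k \in block j -> a i <= a k.
  move: iB; rewrite !mem_block => /andP[iU /andP[lo _]] /andP[kU /andP[_ hi]].
  have := sorted_ltn_nth (fun x y z (h1 : a x <= a y) h2 => le_trans h2 h1) i
    sorted_decr_enum (index k decr_enum) (index i decr_enum).
  rewrite !inE !index_mem !mem_decr_enum !nth_index ?mem_decr_enum //.
  by apply => //; apply: leq_trans hi lo.
have cardK : #|block j| = K.
  by apply/eqP; rewrite eqn_leq card_block (card_block_full iB).
by rewrite -cardK mulr_natl -sumr_const; apply: ler_sum.
Qed.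

Lemma sum_block_indicator i n (v : R) : (N <= n)%N ->
  \sum_(j < n) (if i \in block j then v else 0) = if i \in U then v else 0.
Proof.
move=> Nn; have [iU|iU] := boolP (i \in U); last first.
  by rewrite big1 // => j _; rewrite inE (negbTE iU).
have lt_n : (index i decr_enum %/ K < n)%N.
  apply: leq_ltn_trans (leq_div _ _) (leq_trans (index_decr_enum_lt iU) Nn).
rewrite (bigD1 (Ordinal lt_n)) //= inE iU eqxx big1 ?addr0 // => j jn.
by rewrite inE iU /=; case: eqP => // eij; case/eqP: jn; apply: val_inj.
Qed.

Lemma sum_blocks (F : 'I_N -> R) n : (N <= n)%N ->
  \sum_(i in U) F i = \sum_(j < n) \sum_(i in block j) F i.
Proof.
move=> Nn; rewrite big_mkcond /=.
under eq_bigr do rewrite -(sum_block_indicator _ _ Nn).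
by rewrite exchange_big; apply: eq_bigr => j _; rewrite [RHS]big_mkcond.
Qed.

Lemma restr_blocks (x : 'cV[R]_N) n : (N <= n)%N ->
  restr U x = \sum_(j < n) restr (block j) x.
Proof.
move=> Nn; apply/matrixP => i k; rewrite ord1 !mxE summxE.
by rewrite -(sum_block_indicator _ _ Nn); apply: eq_bigr => j _; rewrite mxE.
Qed.

End Blocks.

Section NullSpaceProperty.
Variables (R : realType) (N P K : nat) (phi : 'M[R]_(P, N)) (d : R).
Hypotheses (K_gt0 : (0 < K)%N) (rip : RIP_holds phi (2 * K) d) (d_ge0 : 0 <= d).
Variables (h : 'cV[R]_N) (T : {set 'I_N}).
Hypotheses (card_T : (#|T| <= K)%N) (phi_h : phi *m h = 0).

(* Candes' decomposition: [B j] is the [j]-th run of the [K] largest remaining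
   entries of [h] off [T], and [head] is [h] on [T] together with the first run. *)
Let B := block K (fun i => `|h i 0|) (~: T).
Let head := restr T h + restr (B 0) h.
Let tail := \sum_(j < N) l2norm (restr (B j.+1) h).

Let disjoint_T_B j : [disjoint T & B j].
Proof. by rewrite disjoint_sym disjoints_subset block_sub. Qed.

Let card_B j : (#|B j| <= K)%N := card_block _ _ K_gt0 j.

Let card_T_B j : (#|T| + #|B j| <= 2 * K)%N.
Proof. by rewrite mul2n -addnn leq_add. Qed.

Lemma phi_head : phi *m head = - \sum_(j < N) phi *m restr (B j.+1) h.
Proof.
have dec : h = head + \sum_(j < N) restr (B j.+1) h.
  rewrite {1}(restr_setC T h) (restr_blocks K (fun i => `|h i 0|) (~: T) h (leqnSn N)).
  by rewrite big_ord_recl addrA; under eq_bigr do rewrite lift0.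
by apply/eqP; rewrite -addr_eq0 -mulmx_sumr -mulmxDr -dec phi_h.
Qed.

Lemma sqnorm_head :
  sqnorm head = l2norm (restr T h) ^+ 2 + l2norm (restr (B 0) h) ^+ 2.
Proof.
rewrite !sqr_l2norm sqnormD_disjoint //.
exact: disjointW (supp_restr _ _) (supp_restr _ _) (disjoint_T_B 0).
Qed.

Lemma sqnorm_head_le :
  (1 - d) * sqnorm head <=
  d * (l2norm (restr T h) + l2norm (restr (B 0) h)) * tail.
Proof.
have sparse : (l0norm head <= 2 * K)%N.
  apply: leq_trans (card_T_B 0); apply: leq_trans (leq_card_setU _ _).
  apply/subset_leq_card/(subset_trans (suppD_sub _ _)).
  by apply: setUSS; apply: supp_restr.
have [lo _] := rip sparse; apply: le_trans lo _.
rewrite sqnorm_dotv {2}phi_head dotvNr dotv_sumr -sumrN /tail !mulr_sumr.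
apply: ler_sum => j _; apply: le_trans (ler_norm _) _.
rewrite normrN mulmxDr dotvDl mulrDr mulrDl; apply: le_trans (ler_normD _ _) _.
have card_B0_B : (#|B 0| + #|B j.+1| <= 2 * K)%N by rewrite mul2n -addnn leq_add.
apply: lerD.
  exact: (rip_dotv_abs rip (disjoint_T_B j.+1) (card_T_B j.+1)
    (supp_restr T h) (supp_restr _ h)).
exact: (rip_dotv_abs rip (block_disjoint _ _ _ (isT : 0 != j.+1)%N) card_B0_B
  (supp_restr (B 0) h) (supp_restr _ h)).
Qed.

Lemma l2norm_head_le_tail : (1 - d) * l2norm head <= Num.sqrt 2 * d * tail.
Proof.
have tail_ge0 : 0 <= tail by apply: sumr_ge0 => j _; apply: l2norm_ge0.
have [->|head_neq0] := eqVneq head 0.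
  by rewrite l2norm0 mulr0 !mulr_ge0 ?sqrtr_ge0.
have := sqnorm_head_le; have := sqnorm_head; rewrite -sqr_l2norm.
have := l2norm_gt0 head; rewrite head_neq0.
move: (l2norm head) (l2norm (restr T h)) (l2norm_ge0 (restr T h)) => u a a0 u_gt0.
move: (l2norm (restr (B 0) h)) (l2norm_ge0 (restr (B 0) h)) => b b0 u2 H.
have ab_le : a + b <= Num.sqrt 2 * u.
  rewrite -ler_sqr ?nnegrE ?addr_ge0 ?mulr_ge0 ?sqrtr_ge0 ?(ltW u_gt0) //.
  rewrite exprMn sqr_sqrtr ?ler0n // u2; have := sqr_ge0 (a - b); nra.
rewrite -(ler_pM2r u_gt0).
have dt_ge0 : 0 <= d * tail by rewrite mulr_ge0.
nra.
Qed.

Lemma sum_abs_T_le_head : \sum_(i in T) `|h i 0| <= Num.sqrt K%:R * l2norm head.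
Proof.
have rK_ge0 : 0 <= Num.sqrt (K%:R : R) := sqrtr_ge0 _.
have hT_le : l2norm (restr T h) <= l2norm head.
  rewrite -ler_sqr ?nnegrE ?l2norm_ge0 // [X in _ <= X]sqr_l2norm sqnorm_head.
  by rewrite lerDl sqr_ge0.
apply: le_trans (ler_wpM2l rK_ge0 hT_le).
rewrite -ler_sqr ?nnegrE ?sumr_ge0 ?mulr_ge0 ?l2norm_ge0 //.
rewrite exprMn sqr_sqrtr ?ler0n // sqr_l2norm sqnorm_restr.
apply: le_trans (sqr_sum_le_card _ _) _.
under eq_bigr do rewrite real_normK ?num_real //.
apply: ler_wpM2r; last by rewrite ler_nat.
by apply: sumr_ge0 => i _; apply: sqr_ge0.
Qed.

(* Each entry of a run is dominated by the average of the previous run. *)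
Lemma tail_le_sum_abs_setC : Num.sqrt K%:R * tail <= \sum_(i in ~: T) `|h i 0|.
Proof.
rewrite (sum_blocks K (fun i => `|h i 0|) (~: T) _ (leqnn N)) /tail mulr_sumr.
apply: ler_sum => j _; set S := \sum_(k in B j) `|h k 0|.
have S_ge0 : 0 <= S by apply: sumr_ge0.
have K_pos : 0 < K%:R :> R by rewrite ltr0n.
rewrite -ler_sqr ?nnegrE ?mulr_ge0 ?sqrtr_ge0 ?l2norm_ge0 //.
rewrite exprMn sqr_sqrtr ?ler0n // sqr_l2norm sqnorm_restr -(ler_pM2l K_pos) mulrA -expr2.
have entry i : i \in B j.+1 -> K%:R ^+ 2 * h i 0 ^+ 2 <= S ^+ 2.
  move=> iB; rewrite -(real_normK (num_real (h i 0))) -exprMn.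
  by rewrite ler_sqr ?nnegrE ?mulr_ge0 // block_decay.
rewrite mulr_sumr; apply: le_trans (ler_sum _ entry) _.
by rewrite sumr_const mulr_natl ler_wpMn2l ?sqr_ge0 ?card_B.
Qed.

Lemma rip_null_space_property : d < Num.sqrt 2 - 1 -> h != 0 ->
  \sum_(i in T) `|h i 0| < \sum_(i in ~: T) `|h i 0|.
Proof.
move=> d_lt h_neq0; set H := \sum_(i in T) _; set L := \sum_(i in ~: T) _.
have [H_ge0 L_ge0] : 0 <= H /\ 0 <= L by split; apply: sumr_ge0.
have s_ge0 : 0 <= Num.sqrt (2 : R) := sqrtr_ge0 _.
have s2 : Num.sqrt (2 : R) ^+ 2 = 2 by rewrite sqr_sqrtr ?ler0n.
have sd_lt : Num.sqrt 2 * d < 1 - d by nra.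
have dK_gt0 : 0 < 1 - d by apply: le_lt_trans sd_lt; rewrite mulr_ge0.
have key : (1 - d) * H <= Num.sqrt 2 * d * L.
  apply: le_trans (ler_wpM2l (ltW dK_gt0) sum_abs_T_le_head) _.
  rewrite mulrCA; apply: le_trans (ler_wpM2l (sqrtr_ge0 _) l2norm_head_le_tail) _.
  rewrite mulrCA; apply: ler_wpM2l; first by rewrite mulr_ge0.
  exact: tail_le_sum_abs_setC.
have L_gt0 : 0 < L.
  rewrite lt_neqAle L_ge0 andbT; apply: contraNneq h_neq0 => L0.
  rewrite -l1norm_eq0 (l1norm_setC T) -/H -/L -L0 addr0.
  rewrite eq_le H_ge0 andbT -(ler_pM2l dK_gt0) mulr0.
  by move: key; rewrite -L0 mulr0.
nra.
Qed.

End NullSpaceProperty.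

Lemma l1norm_lt_of_null_space_property (R : realType) N (x xt : 'cV[R]_N) :
  \sum_(i in supp x) `|(xt - x) i 0| < \sum_(i in ~: supp x) `|(xt - x) i 0| ->
  l1norm x < l1norm xt.
Proof.
move=> nsp; rewrite (l1norm_setC (supp x) x) (l1norm_setC (supp x) xt).
have off_x i : i \in ~: supp x -> x i 0 = 0 by rewrite !inE negbK => /eqP.
rewrite [X in _ + X < _]big1 ?addr0 => [|i /off_x ->]; last exact: normr0.
have -> : \sum_(i in ~: supp x) `|xt i 0| = \sum_(i in ~: supp x) `|(xt - x) i 0|.
  by apply: eq_bigr => i /off_x xi0; rewrite !mxE xi0 subr0.
have : \sum_(i in supp x) `|x i 0| - \sum_(i in supp x) `|(xt - x) i 0|
         <= \sum_(i in supp x) `|xt i 0|.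
  rewrite -sumrB; apply: ler_sum => i _; rewrite !mxE.
  by have := lerB_normD (x i 0) (xt i 0 - x i 0); rewrite [x i 0 + _]addrC subrK.
lra.
Qed.

Lemma rip_l1_recovery (R : realType) N P (phi : 'M[R]_(P, N)) K d (x xt : 'cV[R]_N) :
  (0 < K)%N -> RIP_holds phi (2 * K) d -> d < Num.sqrt 2 - 1 ->
  (#|supp x| <= K)%N -> phi *m xt = phi *m x -> xt != x ->
  l1norm x < l1norm xt.
Proof.
move=> K_gt0 rip d_lt card_x phi_xt xt_neq_x.
apply: l1norm_lt_of_null_space_property.
have sqrt2_gt1 : 1 < Num.sqrt (2 : R) by rewrite -[X in X < _]sqrtr1 ltr_sqrt ?ltr1n.
have rip' : RIP_holds phi (2 * K) (Num.max d 0).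
  by apply: RIP_holds_le rip _; rewrite le_max lexx.
have d'_ge0 : 0 <= Num.max d 0 by rewrite le_max lexx orbT.
have d'_lt : Num.max d 0 < Num.sqrt 2 - 1 by rewrite gt_max d_lt subr_gt0.
have phi_h : phi *m (xt - x) = 0 by rewrite mulmxBr phi_xt subrr.
by apply: rip_null_space_property K_gt0 rip' d'_ge0 _ _ card_x phi_h d'_lt _; rewrite subr_eq0.
Qed.

Lemma card_bigcup_le (T I : finType) (S : {pred I}) (F : I -> {set T}) :
  (#|\bigcup_(j in S) F j| <= \sum_(j in S) #|F j|)%N.
Proof.
elim/big_rec2: _ => [|j X n _ IH]; first by rewrite cards0.
by apply: leq_trans (leq_card_setU _ _) _; rewrite leq_add2l.
Qed.

Section Dynamics.
Variables (R : realType) (N : nat) (A : 'I_N -> 'I_N -> bool) (f : 'I_N -> R -> R)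
  (h : 'I_N -> 'I_N -> R -> R -> R).
Hypotheses (f0 : forall i, f i 0 = 0) (h00 : forall i j, h i j 0 0 = 0).

Lemma supp_nds_step_sub x :
  supp (nds_step A f h x) \subset supp x :|: \bigcup_(j in supp x) L1 A j.
Proof.
apply/supp_subP => i; rewrite !inE negb_or negbK => /andP[/eqP xi0 not_reached].
rewrite mxE xi0 f0 add0r big1 // => j Aij; case: (eqVneq (x j 0) 0) => [->|xj]; first exact: h00.
by case/bigcupP: not_reached; exists j; rewrite inE.
Qed.

Lemma card_supp_nds_step x :
  (#|supp (nds_step A f h x)| <= #|supp x| * (maxOutdeg A).+1)%N.
Proof.
apply: leq_trans (subset_leq_card (supp_nds_step_sub x)) _.
apply: leq_trans (leq_card_setU _ _) _; rewrite mulnS leq_add2l.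
apply: leq_trans (card_bigcup_le _ _) _; rewrite -sum_nat_const.
by apply: leq_sum => j _; exact: (@leq_bigmax _ (outdeg A) j).
Qed.

Lemma card_supp_traj_pinch q e t :
  (#|supp (traj A f h (pinch q e) t)| <= (maxOutdeg A).+1 ^ t)%N.
Proof.
elim: t => [|t IH].
  rewrite expn0 -(cards1 q); apply/subset_leq_card/supp_subP => i iq.
  by rewrite mxE; move: iq; rewrite inE => /negbTE ->.
apply: leq_trans (card_supp_nds_step _) _.
by rewrite expnSr leq_mul2r IH orbT.
Qed.

Lemma supp_nds_step_pinch q e :
  A q q = false -> (forall i, h i q 0 e != 0) ->
  supp (nds_step A f h (pinch q e)) :\ q = L1 A q.
Proof.
move=> no_loop hq; apply/setP => i; rewrite !inE.
have [->|iq] := eqVneq i q; first by rewrite no_loop.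
rewrite /= mxE !mxE (negbTE iq) f0 add0r.
have [Aiq|nAiq] := boolP (A i q).
  rewrite (bigD1 q) //= big1 ?addr0 => [|j /andP[_ jq]]; first by rewrite mxE eqxx hq.
  by rewrite mxE (negbTE jq) h00.
rewrite big1 ?eqxx // => j Aij; rewrite !mxE.
by have /negbTE-> : j != q by apply: contraNneq nAiq => <-.
Qed.

End Dynamics.

Lemma trmx_mul_sqnorm (R : realType) m (v : 'cV[R]_m) : (v^T *m v) 0 0 = sqnorm v.
Proof. by rewrite mxE; apply: eq_bigr => i _; rewrite mxE expr2. Qed.

Section FullColumnRank.
Variables (R : realType) (M n : nat) (Ps : 'M[R]_(M, n)).
Hypothesis rank_Ps : \rank Ps = n.

Lemma full_col_rank_eq0 p (c : 'M[R]_(n, p)) : Ps *m c = 0 -> c = 0.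
Proof.
move=> Pc0; have free : row_free Ps^T by rewrite /row_free mxrank_tr rank_Ps.
apply: trmx_inj; apply/eqP; rewrite trmx0 -(mulmx_free_eq0 _ free).
by rewrite -trmx_mul Pc0 trmx0.
Qed.

Lemma full_col_rank_inj p (c c' : 'M[R]_(n, p)) : Ps *m c = Ps *m c' -> c = c'.
Proof.
move=> e; apply/eqP; rewrite -subr_eq0; apply/eqP/full_col_rank_eq0.
by rewrite mulmxBr e subrr.
Qed.

Lemma gram_unitmx : Ps^T *m Ps \in unitmx.
Proof.
rewrite -row_free_unit -kermx_eq0; apply/eqP/row_matrixP => k; rewrite row0.
set u := row k _; have uG : u *m (Ps^T *m Ps) = 0 by rewrite -row_mul mulmx_ker row0.
have : sqnorm (Ps *m u^T) = 0.
  by rewrite -trmx_mul_sqnorm trmx_mul trmxK mulmxA -(mulmxA u) uG mul0mx mxE.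
move/eqP; rewrite sqnorm_eq0 => /eqP/full_col_rank_eq0 /(congr1 trmx).
by rewrite trmxK trmx0.
Qed.

Lemma gram_pinv_mulmx : invmx (Ps^T *m Ps) *m Ps^T *m Ps = 1%:M.
Proof. by rewrite -mulmxA mulVmx // gram_unitmx. Qed.

Lemma gram_pinv_is_MP : is_MP_pinv Ps (invmx (Ps^T *m Ps) *m Ps^T).
Proof.
have sym : (Ps^T *m Ps)^T = Ps^T *m Ps by rewrite trmx_mul trmxK.
split; first by rewrite -mulmxA gram_pinv_mulmx mulmx1.
- by rewrite gram_pinv_mulmx mul1mx.
- by rewrite !trmx_mul trmxK trmx_inv sym !mulmxA.
- by rewrite gram_pinv_mulmx trmx1.
Qed.

Lemma MP_pinv_mulmx X : is_MP_pinv Ps X -> X *m Ps = 1%:M.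
Proof.
case=> PXP _ _ _; apply: full_col_rank_inj.
by rewrite mulmxA PXP mulmx1.
Qed.

Lemma full_col_rank_solve (c : 'cV[R]_n) (b : 'cV[R]_M) : Ps *m c = b ->
  [/\ Ps *m c = b,
      forall c', Ps *m c' = b -> c' = c,
      Ps^T *m Ps \in unitmx
    & c = invmx (Ps^T *m Ps) *m Ps^T *m b] /\
  (exists X, is_MP_pinv Ps X) /\ (forall X, is_MP_pinv Ps X -> X *m b = c).
Proof.
move=> <-; split; first split => //.
- by move=> c'; apply: full_col_rank_inj.
- exact: gram_unitmx.
- by rewrite mulmxA gram_pinv_mulmx mul1mx.
split; first by exists (invmx (Ps^T *m Ps) *m Ps^T); apply: gram_pinv_is_MP.
by move=> X /MP_pinv_mulmx XP; rewrite mulmxA XP mul1mx.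
Qed.

End FullColumnRank.
Theorem mainTheorem5 (R : realType) (N : nat)
    (A : 'I_N -> 'I_N -> bool) (f : 'I_N -> R -> R)
    (h : 'I_N -> 'I_N -> R -> R -> R) (delta : R)
    (s : 'I_N -> nat) (psi : forall i : 'I_N, 'I_(s i) -> 'cV[R]_N -> R)
    (c : forall i : 'I_N, 'I_(s i) -> R)
    (eps : 'I_N -> R) (P : nat) (phi : 'I_N -> 'M[R]_(P, N)) :
  (* no self-loops *)
  (forall i, A i i = false) ->
  (* Assumption 1 *)
  (forall i, f i 0 = 0) ->
  (* Assumption 2 *)
  0 < delta ->
  (forall i j, h i j 0 0 = 0) ->
  (forall i j (v : R), 0 < `|v| < delta -> h i j 0 v != 0) ->
  (* representation of the dynamics with nonzero coefficients *)
  (forall i l, c i l != 0) ->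
  (forall (x0 : 'cV[R]_N) (t : nat) (i : 'I_N),
      traj A f h x0 t.+1 i 0 = \sum_(l < s i) c i l * psi i l (traj A f h x0 t)) ->
  let smax := (\max_(i < N) s i)%N in
  let xq := fun (q : 'I_N) (t : nat) => traj A f h (pinch q (eps q)) t in
  (* pinching initial conditions *)
  (forall q, 0 < `|eps q| < delta) ->
  let Psi := fun i : 'I_N =>
    \matrix_(k < N * smax, l < s i)
       psi i l (xq (pair_of k).1 (nat_of_ord (pair_of k).2)) in
  (forall i, \rank (Psi i) = s i) ->
  (forall q, exists d : R,
      is_RIC (phi q) (2 * (maxOutdeg A).+1 ^ smax)%N d /\ d < Num.sqrt 2 - 1) ->
  let y := fun (q : 'I_N) (t : nat) => phi q *m xq q t in
  (* (a) unique l1 minimizer *)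
  (forall (q : 'I_N) (t : nat), (1 <= t <= smax)%N ->
      phi q *m xq q t = y q t /\
      forall xt : 'cV[R]_N, phi q *m xt = y q t -> xt != xq q t ->
        l1norm (xq q t) < l1norm xt) /\
  (* (b) support recovers first-level sets *)
  (forall q : 'I_N, supp (xq q 1%N) :\ q = L1 A q) /\
  (* (c) coefficient recovery *)
  (forall i : 'I_N,
     let b := \col_(k < N * smax)
                 xq (pair_of k).1 (nat_of_ord (pair_of k).2).+1 i 0 in
     let cv := \col_(l < s i) c i l in
     [/\ Psi i *m cv = b,
         forall c' : 'cV[R]_(s i), Psi i *m c' = b -> c' = cv,
         (Psi i)^T *m Psi i \in unitmx
       & cv = invmx ((Psi i)^T *m Psi i) *m (Psi i)^T *m b] /\
     (exists X, is_MP_pinv (Psi i) X) /\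
     (forall X, is_MP_pinv (Psi i) X -> X *m b = cv)).
Proof.
move=> no_loop f0 _ h00 h_neq0 _ rep smax xq eps_range Psi rank_Psi ric y.
split; [|split].
- move=> q t /andP[_ t_le]; split=> // xt phi_xt xt_neq.
  have [d [[rip _] d_lt]] := ric q.
  apply: rip_l1_recovery rip d_lt _ phi_xt xt_neq; first by rewrite expn_gt0.
  apply: leq_trans (card_supp_traj_pinch A f0 h00 q (eps q) t) _.
  by rewrite leq_pexp2l.
- move=> q; apply: supp_nds_step_pinch => // i.
  by apply: h_neq0; apply: eps_range.
- move=> i b cv; apply: full_col_rank_solve => //.
  apply/matrixP => k z; rewrite ord1 [in RHS]mxE rep mxE.
  by apply: eq_bigr => l _; rewrite !mxE mulrC.
Qed.
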